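(* Assume $C^\top C\succ0$, and let $\gamma>0$, $\sigma>0$, $\lambda>0$. Let $X_r=(\widetilde W_r,y_r)$, $r\ge0$, be generated by the alternating scheme of the context from a feasible initial point $\widetilde W_0\in\mathcal{X}_1$, $y_0\in\mathbb{R}^{mn}_+$. Then every cluster point $z=(z_1,z_2)$ of $(X_r)$ is a coordinatewise minimizer of $\widehat H_\sigma$ with respect to the blocks $\widetilde W\in\mathbb{R}^{p^2}$ and $y\in\mathbb{R}^{mn}$, i.e. $\widehat H_\sigma(z_1+d_1,z_2)\ge\widehat H_\sigma(z)$ for all $d_1$ with $(z_1+d_1,z_2)\in\operatorname{dom}\widehat H_\sigma$, and $\widehat H_\sigma(z_1,z_2+d_2)\ge\widehat H_\sigma(z)$ for all $d_2$ with $(z_1,z_2+d_2)\in\operatorname{dom}\widehat H_\sigma$. If in addition $\widehat H_\sigma$ is regular at $z$, then $z$ is a stationary point of $\widehat H_\sigma$.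
   Context: Let $n,m,M\ge1$, $p=m+n$. For $i=1,\dots,M$ let $A_i\in\mathbb{R}^{n\times n}$, $B_{2,i}\in\mathbb{R}^{n\times m}$, $F_i=\begin{bmatrix}A_i&B_{2,i}\\0&0\end{bmatrix}$. Let $B_1\in\mathbb{R}^{n\times l}$, $C\in\mathbb{R}^{q\times n}$, $D\in\mathbb{R}^{q\times m}$ with $C^\top D=0$, $D^\top D\succ0$, $B_1B_1^\top\succ0$; $Q=\begin{bmatrix}B_1B_1^\top&0\\0&0\end{bmatrix}$, $R=\begin{bmatrix}C^\top C&0\\0&D^\top D\end{bmatrix}$, $V_1=[0,\ I_m]$, $V_2=[I_n,\ 0]$, $\Psi_i(W)=-V_2(F_iW+WF_i^\top+Q)V_2^\top$. $\mathrm{vec}$ is column-stacking; $\mathcal{P}:=V_2\otimes V_1$, so $\mathcal{P}\,\mathrm{vec}(W)=\mathrm{vec}(V_1WV_2^\top)$. $\Gamma^k_+=\{\mathrm{vec}(X):X\in\mathbb{S}^k_+\}$, $\delta_S$ the indicator of $S$, $\Omega=\{\mathrm{vec}(W):W_{ij}=0,\ 1\le i<j\le n\}$, $\mathcal{X}_1=\{\mathrm{vec}(W)\in\Gamma^p_+:\mathrm{vec}(\Psi_i(W))\in\Gamma^n_+\ \forall i,\ \mathrm{vec}(W)\in\Omega\}$, $r_1(\widetilde W)=\langle\mathrm{vec}(R),\widetilde W\rangle+\delta_{\mathcal{X}_1}(\widetilde W)$. For $x\in\mathbb{R}^{mn}$, $f_\sigma(x)=\sum_\ell(1-e^{-x_\ell/\sigma})$,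 $g_\sigma=-f_\sigma$, $g_\sigma^*$ its convex conjugate; $|\cdot|$ componentwise. Define $\widehat H_\sigma(\widetilde W,y)=r_1(\widetilde W)+\gamma g^*_\sigma(-y)+\gamma y^\top|\mathcal{P}\widetilde W|+\delta_{\mathbb{R}^{mn}_+}(y)$. Scheme: for $r=1,2,\dots$: if $r$ is odd, $\widetilde W_r=\widetilde W_{r-1}$ and $y_r=\operatorname{argmin}_{y\in\mathbb{R}^{mn}_+}\{\gamma g_\sigma^*(-y)+\gamma y^\top|\mathcal{P}\widetilde W_{r-1}|\}=\nabla f_\sigma(|\mathcal{P}\widetilde W_{r-1}|)$; if $r$ is even, $y_r=y_{r-1}$ and $\widetilde W_r\in\operatorname{argmin}_{\widetilde W\in\mathcal{X}_1}\{\langle\mathrm{vec}(R),\widetilde W\rangle+\gamma y_{r-1}^\top|\mathcal{P}\widetilde W|+\frac1{2\lambda}\|\widetilde W-\widetilde W_{r-1}\|^2\}$. Definitions: for $\phi$ on a convex set $\mathcal{D}$, $\phi'(z;d)=\liminf_{t\downarrow0}\frac{\phi(z+td)-\phi(z)}{t}$; $z$ is a stationary point if $\phi'(z;d)\ge0$ for all $d$ with $z+d\in\mathcal{D}$ (here $\mathcal{D}=\mathcal{X}_1\times\mathbb{R}^{mn}_+$). $\widehat H_\sigma$ is regular at $z$ (w.r.t. the two blocks) if $\widehat H_\sigma'(z;d)\ge0$ for every $d=(d_1,d_2)$ such that $\widehat H_\sigma'(z;(d_1,0))\ge0$ and $\widehat H_\sigma'(z;(0,d_2))\ge0$. *)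

From HB Require Import structures.
From mathcomp Require Import all_boot all_order all_algebra.
From mathcomp Require Import all_classical all_reals all_analysis.

Set Implicit Arguments.
Unset Strict Implicit.
Unset Printing Implicit Defensive.

Import Order.TTheory GRing.Theory Num.Theory.
Import numFieldNormedType.Exports.
Local Open Scope classical_set_scope.
Local Open Scope ring_scope.

Section Defs.
Variable R : realType.

(* column-stacking vec : 'M_(a,b) -> R^{a*b}; vec(W)_{j*a+i} = W i j *)
Definition vec (a b : nat) (W : 'M[R]_(a, b)) : 'cV[R]_(b * a) := (mxvec W^T)^T.
Definition unvec (a b : nat) (w : 'cV[R]_(b * a)) : 'M[R]_(a, b) := (vec_mx w^T)^T.

Definition dotv (k : nat) (a b : 'cV[R]_k) : R := \sum_(i < k) a i 0 * b i 0.

Definition absv (k : nat) (x : 'cV[R]_k) : 'cV[R]_k := map_mx (fun t => `|t|) x.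

Definition nonneg (k : nat) (y : 'cV[R]_k) : Prop := forall i, 0 <= y i 0.

Definition psd (k : nat) (X : 'M[R]_k) : Prop :=
  X^T = X /\ forall x : 'cV[R]_k, 0 <= (x^T *m X *m x) 0 0.
Definition posdef (k : nat) (X : 'M[R]_k) : Prop :=
  X^T = X /\ forall x : 'cV[R]_k, x != 0 -> 0 < (x^T *m X *m x) 0 0.

Definition Gamma_plus (k : nat) (w : 'cV[R]_(k * k)) : Prop :=
  exists X : 'M[R]_k, psd X /\ w = vec X.

Definition indic (T : Type) (S : T -> Prop) (x : T) : \bar R :=
  if pselect (S x) then 0%E else +oo%E.

Section Problem.
Variables (n m M l q : nat).
Variables (A : 'I_M -> 'M[R]_n) (B2 : 'I_M -> 'M[R]_(n, m)).
Variables (B1 : 'M[R]_(n, l)) (C : 'M[R]_(q, n)) (D : 'M[R]_(q, m)).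
Variables (gamma sigma : R).

(* p = n + m; the first n coordinates are the state block, the last m the input block *)
Local Notation p := (n + m)%N.

Definition Fm (i : 'I_M) : 'M[R]_p := block_mx (A i) (B2 i) 0 0.
Definition Qm : 'M[R]_p := block_mx (B1 *m B1^T) 0 0 0.
Definition Rm : 'M[R]_p := block_mx (C^T *m C) 0 0 (D^T *m D).
Definition V1 : 'M[R]_(m, p) := row_mx 0 1%:M.
Definition V2 : 'M[R]_(n, p) := row_mx 1%:M 0.

Definition Psi (i : 'I_M) (W : 'M[R]_p) : 'M[R]_n :=
  - (V2 *m (Fm i *m W + W *m (Fm i)^T + Qm) *m V2^T).

(* P = V2 (x) V1, acting by  P vec(W) = vec(V1 W V2^T) *)
Definition Pop (w : 'cV[R]_(p * p)) : 'cV[R]_(n * m) :=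
  vec (V1 *m unvec w *m V2^T).

Definition Omega (w : 'cV[R]_(p * p)) : Prop :=
  exists W : 'M[R]_p, w = vec W /\
    forall i j : 'I_p, (i < j)%N -> (j < n)%N -> W i j = 0.

Definition X1 (w : 'cV[R]_(p * p)) : Prop :=
  Gamma_plus w /\ (forall i, Gamma_plus (vec (Psi i (unvec w)))) /\ Omega w.

Definition r1 (w : 'cV[R]_(p * p)) : \bar R :=
  ((dotv (vec Rm) w)%:E + indic X1 w)%E.

Definition f_sigma (x : 'cV[R]_(n * m)) : R :=
  \sum_(k < n * m) (1 - expR (- x k 0 / sigma)).
Definition g_sigma (x : 'cV[R]_(n * m)) : R := - f_sigma x.
Definition g_sigma_conj (v : 'cV[R]_(n * m)) : \bar R :=
  ereal_sup [set (dotv v x - g_sigma x)%:E | x in [set: 'cV[R]_(n * m)]].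
Definition grad_f_sigma (x : 'cV[R]_(n * m)) : 'cV[R]_(n * m) :=
  \col_k (expR (- x k 0 / sigma) / sigma).

Definition Hhat (w : 'cV[R]_(p * p)) (y : 'cV[R]_(n * m)) : \bar R :=
  (r1 w + gamma%:E * g_sigma_conj (- y)
   + (gamma * dotv y (absv (Pop w)))%:E + indic (@nonneg _) y)%E.

Definition Hhat2 (z : 'cV[R]_(p * p) * 'cV[R]_(n * m)) : \bar R := Hhat z.1 z.2.

(* directional derivative phi'(z;d) = liminf_{t -> 0+} (phi(z+td) - phi(z))/t *)
Definition dirder (z d : 'cV[R]_(p * p) * 'cV[R]_(n * m)) : \bar R :=
  let phi := fun t : R =>
    ((Hhat2 ((z.1 + t *: d.1)%R, (z.2 + t *: d.2)%R) - Hhat2 z) * (t^-1)%:E)%E in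
  ereal_sup [set ereal_inf [set phi t | t in [set t : R | 0 < t < delta]]
            | delta in [set delta : R | 0 < delta]].

Definition Dom (z : 'cV[R]_(p * p) * 'cV[R]_(n * m)) : Prop :=
  X1 z.1 /\ nonneg z.2.

Definition stationary (z : 'cV[R]_(p * p) * 'cV[R]_(n * m)) : Prop :=
  forall d, Dom (z.1 + d.1, z.2 + d.2) -> (0 <= dirder z d)%E.

Definition regular (z : 'cV[R]_(p * p) * 'cV[R]_(n * m)) : Prop :=
  forall d : 'cV[R]_(p * p) * 'cV[R]_(n * m),
    (0 <= dirder z (d.1, 0%R))%E -> (0 <= dirder z (0%R, d.2))%E ->
    (0 <= dirder z d)%E.

Definition W_step_obj (lambda : R) (Wprev : 'cV[R]_(p * p)) (yprev : 'cV[R]_(n * m))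
    (w : 'cV[R]_(p * p)) : R :=
  dotv (vec Rm) w + gamma * dotv yprev (absv (Pop w))
  + (2 * lambda)^-1 * dotv (w - Wprev) (w - Wprev).

Definition is_scheme (lambda : R) (X : nat -> 'cV[R]_(p * p) * 'cV[R]_(n * m)) : Prop :=
  X1 (X 0%N).1 /\ nonneg (X 0%N).2 /\
  (forall r : nat, (0 < r)%N -> odd r ->
     (X r).1 = (X r.-1).1 /\ (X r).2 = grad_f_sigma (absv (Pop (X r.-1).1))) /\
  (forall r : nat, (0 < r)%N -> ~~ odd r ->
     (X r).2 = (X r.-1).2 /\ X1 (X r).1 /\
     forall w, X1 w ->
       W_step_obj lambda (X r.-1).1 (X r.-1).2 (X r).1
       <= W_step_obj lambda (X r.-1).1 (X r.-1).2 w).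

End Problem.
End Defs.

(* Along the scheme the surrogate energy
     E(W) = <vec R, W> + gamma f_sigma(|P W|)
   decreases by at least |W_{r+1} - W_r|^2 / (2 lambda) at every step: the
   y-step sets y to the gradient of the concave f_sigma at |P W|, and the
   tangent majorizes f_sigma.  E is continuous, so along the iterates it is
   bounded below by its value at the cluster point z; hence the W-increments
   tend to 0 and (z, z) is a cluster point of the consecutive pairs
   (X_{2k+2}, X_{2k+1}).  Passing to the limit in the two steps gives
   z_2 = grad f_sigma(|P z_1|) and shows that z_1 is a fixed point of the
   proximal W-step, hence, by convexity, a minimizer of the W-subproblem.
   Since Hhat(., grad f_sigma(a)) is that subproblem up to a constant, and
   Fenchel-Young gives Hhat(z_1, y) >= E(z_1) = Hhat(z), the point z
   minimizes Hhat in each block; a finite blockwise minimizer has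
   nonnegative partial directional derivatives, which regularity combines. *)

From Pilot Require Import Defs.
From HB Require Import structures.
From mathcomp Require Import all_boot all_order all_algebra.
From mathcomp Require Import all_classical all_reals all_analysis.
From mathcomp Require Import zify ring lra.
Import Order.TTheory GRing.Theory Num.Theory.
Import numFieldNormedType.Exports.
Local Open Scope classical_set_scope.
Local Open Scope ring_scope.

Set Implicit Arguments.
Unset Strict Implicit.
Unset Printing Implicit Defensive.

Section cluster_points.
Variable R : realType.

Lemma cluster_closed (T : topologicalType) (F : set_system T) (A : set T) z :
  closed A -> F A -> cluster F z -> A z.
Proof. by move=> /closure_id {2}-> FA; rewrite clusterE => /(_ A FA). Qed.

Lemma cluster_le (T : topologicalType) (F : set_system T) {FF : Filter F}
    (G H : T -> R) z :
  cluster F z -> continuous G -> continuous H -> (\forall t \near F, G t <= H t) ->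
  G z <= H z.
Proof.
move=> Fz cG cH FGH; rewrite -subr_le0; move: Fz.
apply: (cluster_closed (A := (fun t => G t - H t) @^-1` [set x | x <= 0])).
- apply: preimage_closed; last exact: closed_le.
  by move=> t _; exact: (@continuousB _ R^o _ G H t (cG t) (cH t)).
- by apply: filterS FGH => t; rewrite /= subr_le0.
Qed.

Lemma cluster_eq (T : topologicalType) (F : set_system T) {FF : Filter F}
    (G H : T -> R) z :
  cluster F z -> continuous G -> continuous H -> (\forall t \near F, G t = H t) ->
  G z = H z.
Proof.
move=> Fz cG cH FGH; apply/eqP; rewrite eq_le.
by rewrite !(cluster_le Fz) //; apply: filterS FGH => t ->.
Qed.

Lemma cluster_seqP (T : pseudoMetricType R) (x : nat -> T) z :
  cluster (x @ \oo) z <->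
  forall e, 0 < e -> forall N, exists2 r, (N <= r)%N & ball z e (x r).
Proof.
split=> [xz e e0 N | xz A B [N _ NA] /nbhs_ballP[e e0 eB]].
  have xN : (x @ \oo) [set x r | r in [set r | (N <= r)%N]].
    by exists N => // r Nr; exists r.
  have [_ [[r Nr <-] zr]] := xz _ _ xN (nbhsx_ballx z e e0).
  by exists r.
by have [r /NA Ar /eB Br] := xz e e0 N; exists (x r).
Qed.

Lemma cluster_pairs (T : pseudoMetricType R) (x : nat -> T) z :
  (forall e, 0 < e -> \forall k \near \oo, ball (x k.*2.+1) e (x k.*2.+2)) ->
  cluster (x @ \oo) z -> cluster ((fun k => (x k.*2.+2, x k.*2.+1)) @ \oo) (z, z).
Proof.
move=> xclose /cluster_seqP xz; apply/cluster_seqP => e e0 N.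
have e20 : 0 < e / 2 by rewrite divr_gt0.
have [N1 _ xN1] := xclose _ e20.
have [r Nr zr] := xz _ e20 (N + N1).*2.+2.
have [k [rk|rk]] : exists k, r = k.*2.+1 \/ r = k.*2.+2.
  case: r Nr {zr} => [//|r] _.
  elim: r => [|r [k [->|->]]]; first by exists 0%N; left.
    by exists k; right.
  by exists k.+1; left.
all: exists k; first lia.
all: have kN1 : (N1 <= k)%N by lia.
all: have := xN1 k kN1; subst r => xk.
all: split; rewrite (splitr e).
all: by [apply: ball_triangle zr xk | apply: ball_triangle zr (ball_sym xk)
        | apply: le_ball zr; rewrite ler_wpDr // ltW].
Qed.
End cluster_points.

Lemma descent_vanish (R : realType) (E d : R^nat) L :
  (forall r, E r.+1 + d r <= E r) -> (forall r, 0 <= d r) -> (forall r, L <= E r) ->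
  d @ \oo --> 0.
Proof.
move=> Ed d0 EL; apply: cvg_series_cvg_0; apply: nondecreasing_is_cvgn.
  by apply: nondecreasing_series => k _ _; exact: d0.
exists (E 0%N - L) => _ [N _ <-].
have : series d N <= E 0%N - E N.
  elim: N => [|N IH]; first by rewrite /series /= big_geq // subrr.
  by rewrite seriesS; have := Ed N; lra.
by have := EL N; lra.
Qed.

Section entrywise_continuity.
Variables (R : realType) (T : topologicalType).

Definition entrywise_continuous a b (F : T -> 'M[R]_(a, b)) :=
  forall i j, continuous (fun t => F t i j).

Lemma continuousR_cst (c : R) : continuous (fun _ : T => c).
Proof. by move=> t; exact: cvg_cst. Qed.

Lemma continuousR_add (f g : T -> R) :
  continuous f -> continuous g -> continuous (fun t => f t + g t).
Proof. by move=> cf cg t; exact: (@continuousD _ R^o _ f g t (cf t) (cg t)). Qed.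

Lemma continuousR_opp (f : T -> R) : continuous f -> continuous (fun t => - f t).
Proof. by move=> cf t; exact: (@continuousN _ R^o _ f t (cf t)). Qed.

Lemma continuousR_mul (f g : T -> R) :
  continuous f -> continuous g -> continuous (fun t => f t * g t).
Proof. by move=> cf cg t; exact: (@continuousM R T f g t (cf t) (cg t)). Qed.

Lemma continuousR_sum k (F : 'I_k -> T -> R) :
  (forall i, continuous (F i)) -> continuous (fun t => \sum_(i < k) F i t).
Proof. by move=> cF; apply: continuous_big => //; exact: add_continuous. Qed.

Lemma continuousR_comp (f : T -> R) (g : R -> R) :
  continuous f -> continuous g -> continuous (fun t => g (f t)).
Proof. by move=> cf cg t; apply: continuous_comp; [exact: cf | exact: cg]. Qed.

Lemma entrywise_continuous_cst a b (M : 'M[R]_(a, b)) :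
  entrywise_continuous (fun=> M).
Proof. by move=> i j t; exact: cvg_cst. Qed.

Lemma entrywise_continuousD a b (F G : T -> 'M[R]_(a, b)) :
  entrywise_continuous F -> entrywise_continuous G ->
  entrywise_continuous (fun t => F t + G t).
Proof.
move=> cF cG i j; under eq_fun do rewrite mxE.
exact: continuousR_add.
Qed.

Lemma entrywise_continuousN a b (F : T -> 'M[R]_(a, b)) :
  entrywise_continuous F -> entrywise_continuous (fun t => - F t).
Proof. by move=> cF i j; under eq_fun do rewrite mxE; exact: continuousR_opp. Qed.

Lemma entrywise_continuousM a b c (F : T -> 'M[R]_(a, b)) (G : T -> 'M[R]_(b, c)) :
  entrywise_continuous F -> entrywise_continuous G ->
  entrywise_continuous (fun t => F t *m G t).
Proof.
move=> cF cG i j; under eq_fun do rewrite mxE.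
by apply: continuousR_sum => k; exact: continuousR_mul.
Qed.

Lemma entrywise_continuous_map a b (F : T -> 'M[R]_(a, b)) (g : R -> R) :
  entrywise_continuous F -> continuous g ->
  entrywise_continuous (fun t => map_mx g (F t)).
Proof. by move=> cF cg i j; under eq_fun do rewrite mxE; exact: continuousR_comp. Qed.

Lemma entrywise_continuous_vec a b (F : T -> 'M[R]_(a, b)) :
  entrywise_continuous F -> entrywise_continuous (fun t => vec (F t)).
Proof. by move=> cF i j; under eq_fun do rewrite /vec mxE castmxE !mxE; exact: cF. Qed.

Lemma entrywise_continuous_unvec a b (F : T -> 'cV[R]_(b * a)) :
  entrywise_continuous F -> entrywise_continuous (fun t => unvec (F t)).
Proof. by move=> cF i j; under eq_fun do rewrite /unvec !mxE; exact: cF. Qed.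

Lemma continuous_dotv k (F G : T -> 'cV[R]_k) :
  entrywise_continuous F -> entrywise_continuous G ->
  continuous (fun t => dotv (F t) (G t)).
Proof. by move=> cF cG; apply: continuousR_sum => i; exact: continuousR_mul. Qed.

End entrywise_continuity.
Arguments entrywise_continuous_cst {R T a b} M.

Lemma entrywise_continuous_fst (R : realType) (T U : topologicalType) a b
    (F : T -> 'M[R]_(a, b)) :
  entrywise_continuous F -> entrywise_continuous (fun tu : T * U => F tu.1).
Proof.
by move=> cF i j tu; exact: (continuous_comp (@cvg_fst _ _ _ _ _) (cF i j tu.1)).
Qed.

Lemma entrywise_continuous_snd (R : realType) (T U : topologicalType) a b
    (F : U -> 'M[R]_(a, b)) :
  entrywise_continuous F -> entrywise_continuous (fun tu : T * U => F tu.2).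
Proof.
by move=> cF i j tu; exact: (continuous_comp (@cvg_snd _ _ _ _ _) (cF i j tu.2)).
Qed.

Lemma entrywise_continuous_id (R : realType) a b :
  entrywise_continuous (fun M : 'M[R]_(a, b) => M).
Proof.
move=> i j M A; rewrite -/(nbhs M _) => /nbhs_ballP[e /= e0 eA].
by apply/nbhs_ballP; exists e => //= N [_ MN]; exact: eA.
Qed.

Section vectorization.
Variable R : realType.
Implicit Types (a b k : nat) (s t : R).

Lemma vecD a b (U V : 'M[R]_(a, b)) : vec (U + V) = vec U + vec V.
Proof. by apply/matrixP => i j; rewrite !mxE !castmxE !mxE. Qed.

Lemma vecZ a b s (U : 'M[R]_(a, b)) : vec (s *: U) = s *: vec U.
Proof. by apply/matrixP => i j; rewrite !mxE !castmxE !mxE. Qed.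

Lemma unvecD a b (u v : 'cV[R]_(b * a)) : unvec (u + v) = unvec u + unvec v.
Proof. by apply/matrixP => i j; rewrite !mxE. Qed.

Lemma unvecZ a b s (u : 'cV[R]_(b * a)) : unvec (s *: u) = s *: unvec u.
Proof. by apply/matrixP => i j; rewrite !mxE. Qed.

Lemma vecK a b (u : 'cV[R]_(b * a)) : vec (unvec u) = u.
Proof. by rewrite /vec /unvec trmxK vec_mxK trmxK. Qed.

Lemma unvecK a b (U : 'M[R]_(a, b)) : unvec (vec U) = U.
Proof. by rewrite /vec /unvec trmxK mxvecK trmxK. Qed.

Lemma dotvC k (x y : 'cV[R]_k) : dotv x y = dotv y x.
Proof. by apply: eq_bigr => i _; rewrite mulrC. Qed.

Lemma dotvDr k (x y u : 'cV[R]_k) : dotv x (y + u) = dotv x y + dotv x u.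
Proof. by rewrite /dotv -big_split; apply: eq_bigr => i _; rewrite mxE mulrDr. Qed.

Lemma dotvZr k s (x y : 'cV[R]_k) : dotv x (s *: y) = s * dotv x y.
Proof. by rewrite /dotv mulr_sumr; apply: eq_bigr => i _; rewrite mxE mulrCA. Qed.

Lemma dotvNr k (x y : 'cV[R]_k) : dotv x (- y) = - dotv x y.
Proof. by rewrite -scaleN1r dotvZr mulN1r. Qed.

Lemma dotvBr k (x y u : 'cV[R]_k) : dotv x (y - u) = dotv x y - dotv x u.
Proof. by rewrite dotvDr dotvNr. Qed.

Lemma dotvNl k (x y : 'cV[R]_k) : dotv (- x) y = - dotv x y.
Proof. by rewrite dotvC dotvNr dotvC. Qed.

Lemma dotv0r k (x : 'cV[R]_k) : dotv x 0 = 0.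
Proof. by rewrite /dotv big1 // => i _; rewrite mxE mulr0. Qed.

Lemma dotvZ k s (x : 'cV[R]_k) : dotv (s *: x) (s *: x) = s ^+ 2 * dotv x x.
Proof. by rewrite dotvZr dotvC dotvZr mulrA. Qed.

Lemma dotvv_ge0 k (x : 'cV[R]_k) : 0 <= dotv x x.
Proof. by apply: sumr_ge0 => i _; rewrite -expr2 sqr_ge0. Qed.

Lemma sqr_entry_le_dotvv k (x : 'cV[R]_k) i : x i 0 ^+ 2 <= dotv x x.
Proof.
rewrite /dotv (bigD1 i) //= expr2 lerDl.
by apply: sumr_ge0 => j _; rewrite -expr2 sqr_ge0.
Qed.

Lemma ler_dotv k (y u v : 'cV[R]_k) :
  nonneg y -> (forall i, u i 0 <= v i 0) -> dotv y u <= dotv y v.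
Proof. by move=> y0 uv; apply: ler_sum => i _; exact: ler_wpM2l. Qed.

Lemma ball_dotv k (u v : 'cV[R]_k) e :
  0 < e -> dotv (v - u) (v - u) < e ^+ 2 -> ball u e v.
Proof.
move=> e0 uv; split=> // i j; rewrite [j]ord1 /ball /= distrC.
have := sqr_entry_le_dotvv (v - u) i; rewrite !mxE => /le_lt_trans/(_ uv).
by rewrite -real_normK ?num_real // ltr_pXn2r // ?nnegrE ?normr_ge0 // ltW.
Qed.

End vectorization.

Lemma psd_comb (R : realType) k (X Y : 'M[R]_k) s t :
  0 <= s -> 0 <= t -> psd X -> psd Y -> psd (s *: X + t *: Y).
Proof.
move=> s0 t0 [Xsym Xpos] [Ysym Ypos].
split; first by rewrite linearD !linearZ /= Xsym Ysym.
move=> x; rewrite mulmxDr mulmxDl -!scalemxAr -!scalemxAl.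
move: (Xpos x) (Ypos x); set a := x^T *m X *m x; set b := x^T *m Y *m x.
by rewrite !mxE => a0 b0; rewrite addr_ge0 // mulr_ge0.
Qed.

Lemma psd_cluster (R : realType) (T : topologicalType) (F : set_system T)
    {FF : Filter F} k (H : T -> 'M[R]_k) z :
  entrywise_continuous H -> (\forall t \near F, psd (H t)) -> cluster F z ->
  psd (H z).
Proof.
move=> cH Fpsd Fz; split.
  apply/matrixP => i j; rewrite mxE.
  apply: (@cluster_eq R T F FF (fun t => H t j i) (fun t => H t i j) z Fz).
  - exact: cH.
  - exact: cH.
  by apply: filterS Fpsd => t [/matrixP/(_ i j) + _]; rewrite mxE.
move=> x.
apply: (@cluster_le R T F FF (fun=> 0) (fun t => (x^T *m H t *m x) 0 0) z Fz).
- exact: continuousR_cst.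
- exact: (entrywise_continuousM (entrywise_continuousM
    (entrywise_continuous_cst x^T) cH) (entrywise_continuous_cst x)) 0 0.
- by apply: filterS Fpsd => t [].
Qed.

Lemma Gamma_plusE (R : realType) k (w : 'cV[R]_(k * k)) :
  Gamma_plus w <-> psd (unvec w).
Proof.
split=> [[X [Xpsd ->]] | wpsd]; first by rewrite unvecK.
by exists (unvec w); rewrite vecK.
Qed.

Section proximal_fixpoint.
Variables (R : realType) (V : lmodType R).
Variables (S : set V) (phi N : V -> R) (c : R).
Hypothesis c_ge0 : 0 <= c.
Hypothesis S_convex : forall u v t, S u -> S v -> 0 <= t <= 1 ->
  S (t *: u + (1 - t) *: v).
Hypothesis phi_convex : forall u v t, S u -> S v -> 0 <= t <= 1 ->
  phi (t *: u + (1 - t) *: v) <= t * phi u + (1 - t) * phi v.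
Hypothesis N_scale : forall t u, N (t *: u) = t ^+ 2 * N u.
Hypothesis N_ge0 : forall u, 0 <= N u.

(* Moving from z towards w by t gains t (phi z - phi w) and costs only O(t^2). *)
Lemma prox_fixpoint_min z :
  S z -> (forall w, S w -> phi z <= phi w + c * N (w - z)) ->
  forall w, S w -> phi z <= phi w.
Proof.
move=> Sz zfix w Sw; rewrite leNgt; apply/negP => wz.
set d := phi z - phi w; set K := c * N (w - z).
have d_gt0 : 0 < d by rewrite subr_gt0.
have K_ge0 : 0 <= K by rewrite mulr_ge0.
have gain t : 0 < t <= 1 -> d <= t * K.
  case/andP=> t0 t1; have t01 : 0 <= t <= 1 by rewrite ltW.
  have := zfix _ (S_convex Sw Sz t01).
  have -> : t *: w + (1 - t) *: z - z = t *: (w - z).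
    by rewrite scalerBl scale1r addrCA (addrC z) addrK scalerBr.
  rewrite N_scale.
  have := phi_convex Sw Sz t01; rewrite /d /K => convt proxt.
  rewrite -(ler_pM2l t0) mulrA -expr2; lra.
set t := d / (K + d).
have dK_gt0 : 0 < K + d by rewrite ltr_wpDl.
have t_gt0 : 0 < t by rewrite divr_gt0.
have : t * K < d.
  by rewrite /t mulrAC ltr_pdivrMr // mulrDr mulrC ltrDl mulr_gt0.
by rewrite ltNge gain // t_gt0 ler_pdivrMr // mul1r lerDr.
Qed.

End proximal_fixpoint.

Lemma expR_ge_tangent (R : realType) (a b : R) : expR a * (1 + (b - a)) <= expR b.
Proof.
have -> : expR b = expR a * expR (b - a) by rewrite -expRD subrKC.
by apply: ler_wpM2l; [exact: expR_ge0 | exact: expR_ge1Dx].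
Qed.

Section problem.
Variable R : realType.
Variables (n m M l q : nat).
Variables (A : 'I_M -> 'M[R]_n) (B2 : 'I_M -> 'M[R]_(n, m)).
Variables (B1 : 'M[R]_(n, l)) (C : 'M[R]_(q, n)) (D : 'M[R]_(q, m)).
Variables (gamma sigma : R).
Local Notation p := (n + m)%N.
Local Notation cv := 'cV[R]_(p * p).
Local Notation yv := 'cV[R]_(n * m).
Local Notation X1 := (X1 A B2 B1).
Local Notation Psi := (Psi A B2 B1).
Local Notation Pop := (@Pop R n m).
Local Notation f := (f_sigma sigma).
Local Notation grad := (grad_f_sigma sigma).
Local Notation Hhat := (Hhat A B2 B1 C D gamma sigma).

Lemma OmegaE (w : cv) :
  Omega w <-> forall i j : 'I_p, (i < j)%N -> (j < n)%N -> unvec w i j = 0.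
Proof.
split=> [[W [-> W0]] | w0]; first by rewrite unvecK.
by exists (unvec w); rewrite vecK.
Qed.

Lemma Psi_affine i (U V : 'M[R]_p) t :
  Psi i (t *: U + (1 - t) *: V) = t *: Psi i U + (1 - t) *: Psi i V.
Proof.
rewrite /Psi !scalerN -opprD; congr (- _).
set F := Fm A B2 i; set Q := Qm m B1.
have -> : F *m (t *: U + (1 - t) *: V) + (t *: U + (1 - t) *: V) *m F^T + Q =
    t *: (F *m U + U *m F^T + Q) + (1 - t) *: (F *m V + V *m F^T + Q).
  rewrite mulmxDr mulmxDl -!scalemxAr -!scalemxAl !scalerDr.
  rewrite {1}(_ : Q = t *: Q + (1 - t) *: Q); last by rewrite -scalerDl subrKC scale1r.
  by rewrite [X in X + _ = _]addrACA [LHS]addrACA.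
by rewrite [in LHS]mulmxDr [in LHS]mulmxDl -!scalemxAr -!scalemxAl.
Qed.

Lemma X1_convex (u v : cv) t :
  X1 u -> X1 v -> 0 <= t <= 1 -> X1 (t *: u + (1 - t) *: v).
Proof.
move=> [Gu [Psiu Omu]] [Gv [Psiv Omv]] /andP[t0 t1].
have t'0 : 0 <= 1 - t by rewrite subr_ge0.
split; [|split].
- move: Gu Gv; rewrite !Gamma_plusE unvecD !unvecZ; exact: psd_comb.
- move=> i; move: (Psiu i) (Psiv i); rewrite !Gamma_plusE !unvecK.
  by rewrite unvecD !unvecZ Psi_affine; exact: psd_comb.
- move: Omu Omv; rewrite !OmegaE => Omu Omv i j ij jn.
  move: (Omu i j ij jn) (Omv i j ij jn).
  by rewrite unvecD !unvecZ !mxE => -> ->; rewrite !mulr0 addr0.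
Qed.

Lemma PopD (u v : cv) : Pop (u + v) = Pop u + Pop v.
Proof. by rewrite /Pop unvecD mulmxDr mulmxDl vecD. Qed.

Lemma PopZ s (u : cv) : Pop (s *: u) = s *: Pop u.
Proof. by rewrite /Pop unvecZ -scalemxAr -scalemxAl vecZ. Qed.

Definition W_block_obj (y : yv) (w : cv) : R :=
  dotv (vec (Rm C D)) w + gamma * dotv y (absv (Pop w)).

Definition energy (w : cv) : R :=
  dotv (vec (Rm C D)) w + gamma * f (absv (Pop w)).

Lemma W_block_obj_convex y (u v : cv) t : 0 <= gamma -> nonneg y -> 0 <= t <= 1 ->
  W_block_obj y (t *: u + (1 - t) *: v) <=
  t * W_block_obj y u + (1 - t) * W_block_obj y v.
Proof.
move=> g0 y0 /andP[t0 t1]; have t'0 : 0 <= 1 - t by rewrite subr_ge0.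
have abs_convex : dotv y (absv (Pop (t *: u + (1 - t) *: v))) <=
    t * dotv y (absv (Pop u)) + (1 - t) * dotv y (absv (Pop v)).
  rewrite -!dotvZr -dotvDr; apply: ler_dotv => // i.
  rewrite PopD !PopZ !mxE (le_trans (ler_normD _ _)) // !normrM.
  by rewrite (ger0_norm t0) (ger0_norm t'0).
rewrite /W_block_obj dotvDr !dotvZr.
have := ler_wpM2l g0 abs_convex; lra.
Qed.

Lemma f_sigma_le_tangent (a b : yv) : f b <= f a + dotv (grad a) (b - a).
Proof.
rewrite /f_sigma /dotv -big_split; apply: ler_sum => k _ /=; rewrite !mxE.
have := expR_ge_tangent (- a k 0 / sigma) (- b k 0 / sigma).
have -> : - b k 0 / sigma - - a k 0 / sigma = - ((b k 0 - a k 0) / sigma) by ring.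
have -> : expR (- a k 0 / sigma) / sigma * (b k 0 - a k 0) =
    expR (- a k 0 / sigma) * ((b k 0 - a k 0) / sigma) by ring.
set Ea := expR _; set Eb := expR _; set u := _ / sigma; lra.
Qed.

Hypothesis sigma_gt0 : 0 < sigma.

Lemma grad_nonneg (a : yv) : nonneg (grad a).
Proof. by move=> i; rewrite mxE divr_ge0 ?expR_ge0 // ltW. Qed.

Lemma g_sigma_conj_ge (y a : yv) : ((f a - dotv y a)%:E <= g_sigma_conj sigma (- y))%E.
Proof.
by apply: ereal_sup_ubound; exists a => //; rewrite /g_sigma opprK dotvNl addrC.
Qed.

(* The tangent inequality says that [a] attains the supremum defining [g_sigma_conj]. *)
Lemma g_sigma_conj_grad (a : yv) :
  g_sigma_conj sigma (- grad a) = (f a - dotv (grad a) a)%:E.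
Proof.
apply/eqP; rewrite eq_le g_sigma_conj_ge andbT.
apply: ge_ereal_sup => _ [x _ <-]; rewrite lee_fin /g_sigma opprK dotvNl.
have := f_sigma_le_tangent a x; rewrite dotvBr; lra.
Qed.

Lemma Hhat_fin w y v : X1 w -> nonneg y -> g_sigma_conj sigma (- y) = v%:E ->
  Hhat w y = (W_block_obj y w + gamma * v)%:E.
Proof.
move=> Xw y0 yv; rewrite /Hhat /r1 /Defs.indic yv.
case: (pselect (X1 w)) => // ?; case: (pselect (nonneg y)) => // ?.
rewrite !adde0 -EFinM -!EFinD.
by congr EFin; rewrite /W_block_obj; ring.
Qed.

Hypothesis gamma_gt0 : 0 < gamma.

Lemma Hhat_cases w y : Hhat w y = +oo%E \/
  exists2 v, g_sigma_conj sigma (- y) = v%:E &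
    [/\ X1 w, nonneg y & Hhat w y = (W_block_obj y w + gamma * v)%:E].
Proof.
have := g_sigma_conj_ge y 0.
case yv: (g_sigma_conj sigma (- y)) => [v| |] // _; last first.
  left; rewrite /Hhat /r1 /Defs.indic yv gt0_muley ?lte_fin //.
  by case: (pselect (X1 w)); case: (pselect (nonneg y)) => //= *; rewrite ?adde0.
have [Xw|Xw] := pselect (X1 w); have [y0|y0] := pselect (nonneg y).
- by right; exists v; split => //; exact: Hhat_fin.
all: left; rewrite /Hhat /r1 /Defs.indic yv.
all: by case: (pselect (X1 w)); case: (pselect (nonneg y)) => // *; rewrite ?adde0.
Qed.

Lemma Hhat_grad w : X1 w -> Hhat w (grad (absv (Pop w))) = (energy w)%:E.
Proof.
move=> Xw; rewrite (Hhat_fin Xw (grad_nonneg _) (g_sigma_conj_grad _)).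
by congr EFin; rewrite /W_block_obj /energy; ring.
Qed.

Lemma energy_le_Hhat w y : X1 w -> ((energy w)%:E <= Hhat w y)%E.
Proof.
have [->|[v yv [Xw y0 ->]] _] := Hhat_cases w y; first by rewrite leey.
have := g_sigma_conj_ge y (absv (Pop w)); rewrite yv lee_fin => conj_ge.
have := ler_wpM2l (ltW gamma_gt0) conj_ge.
rewrite lee_fin /energy /W_block_obj; lra.
Qed.

Lemma Hhat_W_block_min w0 w a : X1 w0 ->
  (forall u, X1 u -> W_block_obj (grad a) w0 <= W_block_obj (grad a) u) ->
  (Hhat w0 (grad a) <= Hhat w (grad a))%E.
Proof.
move=> Xw0 w0min; have gv := g_sigma_conj_grad a.
rewrite (Hhat_fin Xw0 (grad_nonneg _) gv).
have [->|[v yv [Xw _ ->]]] := Hhat_cases w (grad a); first exact: leey.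
move: yv; rewrite gv => -[<-]; rewrite lee_fin lerD2r; exact: w0min.
Qed.

Section continuity.
Variable T : topologicalType.

Lemma entrywise_continuous_Pop (F : T -> cv) :
  entrywise_continuous F -> entrywise_continuous (fun t => Pop (F t)).
Proof.
move=> cF; apply: entrywise_continuous_vec.
apply: entrywise_continuousM _ (entrywise_continuous_cst _).
apply: entrywise_continuousM (entrywise_continuous_cst _) _.
exact: entrywise_continuous_unvec cF.
Qed.

Lemma entrywise_continuous_absv k (F : T -> 'cV[R]_k) :
  entrywise_continuous F -> entrywise_continuous (fun t => absv (F t)).
Proof. by move=> cF; apply: entrywise_continuous_map cF _; exact: norm_continuous. Qed.

Lemma entrywise_continuous_grad (F : T -> yv) :
  entrywise_continuous F -> entrywise_continuous (fun t => grad (F t)).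
Proof.
move=> cF i j; under eq_fun do rewrite mxE.
apply: continuousR_mul; last exact: continuousR_cst.
apply: continuousR_comp; last exact: continuous_expR.
by apply: continuousR_mul; [exact: continuousR_opp (cF i 0) | exact: continuousR_cst].
Qed.

Lemma continuous_W_block_obj (Y : T -> yv) (W : T -> cv) :
  entrywise_continuous Y -> entrywise_continuous W ->
  continuous (fun t => W_block_obj (Y t) (W t)).
Proof.
move=> cY cW; rewrite /W_block_obj; apply: continuousR_add.
  exact: continuous_dotv (entrywise_continuous_cst _) cW.
apply: continuousR_mul; first exact: continuousR_cst.
exact: continuous_dotv cY (entrywise_continuous_absv (entrywise_continuous_Pop cW)).
Qed.

Lemma continuous_energy (W : T -> cv) :
  entrywise_continuous W -> continuous (fun t => energy (W t)).
Proof.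
move=> cW; rewrite /energy; apply: continuousR_add.
  exact: continuous_dotv (entrywise_continuous_cst _) cW.
apply: continuousR_mul; first exact: continuousR_cst.
apply: continuousR_sum => k; apply: continuousR_add; first exact: continuousR_cst.
apply/continuousR_opp/continuousR_comp; last exact: continuous_expR.
apply: continuousR_mul; last exact: continuousR_cst.
apply: continuousR_opp.
exact: (entrywise_continuous_absv (entrywise_continuous_Pop cW)) k 0.
Qed.

Lemma X1_cluster (F : set_system T) {FF : Filter F} (W : T -> cv) z :
  entrywise_continuous W -> (\forall t \near F, X1 (W t)) -> cluster F z ->
  X1 (W z).
Proof.
move=> cW FX1 Fz; have cU := entrywise_continuous_unvec cW.
split; [|split].
- apply/Gamma_plusE; apply: psd_cluster cU _ Fz.
  by apply: filterS FX1 => t [/Gamma_plusE].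
- move=> i; rewrite Gamma_plusE unvecK.
  apply: (psd_cluster (H := fun t => Psi i (unvec (W t)))) _ _ Fz.
    apply/entrywise_continuousN.
    apply: entrywise_continuousM _ (entrywise_continuous_cst _).
    apply: entrywise_continuousM (entrywise_continuous_cst _) _.
    apply: entrywise_continuousD _ (entrywise_continuous_cst _).
    apply: entrywise_continuousD.
      exact: entrywise_continuousM (entrywise_continuous_cst _) cU.
    exact: entrywise_continuousM cU (entrywise_continuous_cst _).
  by apply: filterS FX1 => t [_ [/(_ i)]]; rewrite Gamma_plusE unvecK.
- apply/OmegaE => i j ij jn.
  apply: (@cluster_eq R T F FF (fun t => unvec (W t) i j) (fun=> 0) z Fz).
  + exact: cU.
  + exact: continuousR_cst.
  by apply: filterS FX1 => t [_ [_ /OmegaE]]; apply.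
Qed.

End continuity.

End problem.

Section scheme.
Variable R : realType.
Variables (n m M l q : nat).
Variables (A : 'I_M -> 'M[R]_n) (B2 : 'I_M -> 'M[R]_(n, m)).
Variables (B1 : 'M[R]_(n, l)) (C : 'M[R]_(q, n)) (D : 'M[R]_(q, m)).
Variables (gamma sigma lambda : R).
Hypotheses (gamma_gt0 : 0 < gamma) (sigma_gt0 : 0 < sigma) (lambda_gt0 : 0 < lambda).
Local Notation p := (n + m)%N.
Local Notation cv := 'cV[R]_(p * p).
Local Notation yv := 'cV[R]_(n * m).
Local Notation X1 := (X1 A B2 B1).
Local Notation Pop := (@Pop R n m).
Local Notation grad := (grad_f_sigma sigma).
Local Notation W_block_obj := (W_block_obj C D gamma).
Local Notation energy := (energy C D gamma sigma).
Local Notation Hhat := (Hhat A B2 B1 C D gamma sigma).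
Local Notation c := (2 * lambda)^-1.

Variable X : nat -> cv * yv.
Hypothesis X_scheme : is_scheme A B2 B1 C D gamma sigma lambda X.

Let dW r := (X r.+1).1 - (X r).1.

Lemma c_gt0 : 0 < c.
Proof. by rewrite invr_gt0 mulr_gt0. Qed.

Lemma scheme_X1 r : X1 (X r).1.
Proof.
have [X0 [_ [Xodd Xeven]]] := X_scheme.
elim: r => [|r IH]; first exact: X0.
have [oddr|evenr] := boolP (odd r.+1).
  by have [-> _] := Xodd r.+1 isT oddr.
by have [_ []] := Xeven r.+1 isT evenr.
Qed.

Lemma scheme_odd r : odd r -> (X r).2 = grad (absv (Pop (X r).1)).
Proof.
have [_ [_ [Xodd _]]] := X_scheme.
by case: r => // r oddr; have [-> ->] := Xodd r.+1 isT oddr.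
Qed.

Lemma scheme_even r : odd r -> (X r.+1).2 = (X r).2 /\
  forall w, X1 w -> W_block_obj (X r).2 (X r.+1).1 + c * dotv (dW r) (dW r) <=
    W_block_obj (X r).2 w + c * dotv (w - (X r).1) (w - (X r).1).
Proof.
have [_ [_ [_ Xeven]]] := X_scheme => oddr.
have := Xeven r.+1 isT; rewrite /= oddr => /(_ isT) [-> [_ Xmin]].
by split=> // w /Xmin.
Qed.

(* The tangent majorization [f b <= f a + <grad a, b - a>] turns the W-step
   into a descent step. *)
Lemma energy_descent r : energy (X r.+1).1 + c * dotv (dW r) (dW r) <= energy (X r).1.
Proof.
have [_ [_ [Xodd _]]] := X_scheme.
have [oddr1|oddr] := boolP (odd r.+1).
  have [Xr1 _] := Xodd r.+1 isT oddr1.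
  by rewrite /dW Xr1 subrr dotv0r mulr0 addr0.
rewrite negbK in oddr; have [_ /(_ _ (scheme_X1 r))] := scheme_even oddr.
rewrite subrr dotv0r mulr0 addr0 scheme_odd // /W_block_obj /energy.
have := f_sigma_le_tangent sigma (absv (Pop (X r).1)) (absv (Pop (X r.+1).1)).
rewrite dotvBr => /(ler_wpM2l (ltW gamma_gt0)).
set f1 := f_sigma _ _; set f0 := f_sigma _ _; set g1 := dotv _ _; set g0 := dotv _ _.
set r0 := dotv _ (X r).1; set r1 := dotv _ (X r.+1).1; set d := c * _; lra.
Qed.

Lemma energy_nonincreasing r s : (r <= s)%N -> energy (X s).1 <= energy (X r).1.
Proof.
move=> /subnK <-; elim: (s - r)%N => [|k IH]; first by rewrite add0n.
rewrite addSn; apply: le_trans IH; apply: le_trans (energy_descent (k + r)).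
by rewrite lerDl mulr_ge0 ?dotvv_ge0 // ltW // c_gt0.
Qed.

Lemma scheme_steps_small L : (forall r, L <= energy (X r).1) ->
  forall e, 0 < e -> \forall r \near \oo, dotv (dW r) (dW r) < e.
Proof.
move=> EL e e0; have c0 := c_gt0.
have dW0 : (fun r => c * dotv (dW r) (dW r)) @ \oo --> 0.
  apply: (descent_vanish (E := fun r => energy (X r).1)) EL => [|r].
    exact: energy_descent.
  by rewrite mulr_ge0 ?dotvv_ge0 // ltW.
apply: filterS (cvgr_lt 0 dW0 (c * e) (mulr_gt0 c0 e0)) => r.
by rewrite ltr_pM2l.
Qed.

Variable z : cv * yv.
Hypothesis X_cluster : cluster (X @ \oo) z.

Let fst_continuous : entrywise_continuous (fun t : cv * yv => t.1) :=
  entrywise_continuous_fst (@entrywise_continuous_id R _ _).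
Let snd_continuous : entrywise_continuous (fun t : cv * yv => t.2) :=
  entrywise_continuous_snd (@entrywise_continuous_id R _ _).

Let W1_continuous : entrywise_continuous (fun ts : cv * yv * (cv * yv) => ts.2.1) :=
  entrywise_continuous_snd fst_continuous.
Let y1_continuous : entrywise_continuous (fun ts : cv * yv * (cv * yv) => ts.2.2) :=
  entrywise_continuous_snd snd_continuous.
Let W2_continuous : entrywise_continuous (fun ts : cv * yv * (cv * yv) => ts.1.1) :=
  entrywise_continuous_fst fst_continuous.

Let odd_double_succ k : odd k.*2.+1.
Proof. by rewrite /= odd_double. Qed.

Lemma cluster_X1 : X1 z.1.
Proof.
apply: (X1_cluster (W := fst)) fst_continuous _ X_cluster.
by exists 0%N => // r _; exact: scheme_X1.
Qed.

Lemma cluster_energy_le r : energy z.1 <= energy (X r).1.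
Proof.
apply: (cluster_le (G := fun t => energy t.1) (H := fun=> energy (X r).1) X_cluster).
- exact: continuous_energy fst_continuous.
- exact: continuousR_cst.
- by exists r => // s; exact: energy_nonincreasing.
Qed.

Lemma cluster_pairs_diag : cluster ((fun k => (X k.*2.+2, X k.*2.+1)) @ \oo) (z, z).
Proof.
apply: cluster_pairs X_cluster => e e0.
have [N _ small] := scheme_steps_small cluster_energy_le (exprn_gt0 2 e0).
exists N => // k kN; split.
  by apply: ball_dotv e0 (small k.*2.+1 _); move: kN => /=; lia.
by have [-> _] := scheme_even (odd_double_succ k); exact: ballxx.
Qed.

Lemma cluster_grad : z.2 = grad (absv (Pop z.1)).
Proof.
apply/matrixP => i j; rewrite [j]ord1.
apply: (@cluster_eq R _ _ _ (fun ts : cv * yv * (cv * yv) => ts.2.2 i 0)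
  (fun ts => grad (absv (Pop ts.2.1)) i 0) (z, z) cluster_pairs_diag).
- exact: y1_continuous.
- exact: (entrywise_continuous_grad (entrywise_continuous_absv
    (entrywise_continuous_Pop W1_continuous))) i 0.
- by exists 0%N => // k _ /=; rewrite scheme_odd.
Qed.

Lemma cluster_prox w : X1 w ->
  W_block_obj z.2 z.1 <= W_block_obj z.2 w + c * dotv (w - z.1) (w - z.1).
Proof.
move=> Xw.
have cw := entrywise_continuous_cst (T := (cv * yv * (cv * yv))%type) w.
apply: (@cluster_le R _ _ _ (fun ts : cv * yv * (cv * yv) => W_block_obj ts.2.2 ts.1.1)
  (fun ts => W_block_obj ts.2.2 w + c * dotv (w - ts.2.1) (w - ts.2.1)) (z, z)
  cluster_pairs_diag).
- exact: continuous_W_block_obj y1_continuous W2_continuous.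
- apply: continuousR_add; first exact: continuous_W_block_obj y1_continuous cw.
  apply: continuousR_mul; first exact: continuousR_cst.
  by apply: continuous_dotv;
    apply: entrywise_continuousD cw (entrywise_continuousN W1_continuous).
- exists 0%N => // k _ /=; have [_ /(_ w Xw)] := scheme_even (odd_double_succ k).
  have := mulr_ge0 (ltW c_gt0) (dotvv_ge0 (dW k.*2.+1)); lra.
Qed.

Lemma cluster_W_block_min w : X1 w -> W_block_obj z.2 z.1 <= W_block_obj z.2 w.
Proof.
apply: (prox_fixpoint_min (S := X1) (N := fun u => dotv u u) (c := c)).
- exact: ltW c_gt0.
- by move=> *; exact: X1_convex.
- move=> u v t _ _; apply: W_block_obj_convex (ltW gamma_gt0) _.
  by rewrite cluster_grad; exact: grad_nonneg.
- exact: dotvZ.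
- exact: dotvv_ge0.
- exact: cluster_X1.
- exact: cluster_prox.
Qed.

Lemma cluster_Hhat : Hhat z.1 z.2 = (energy z.1)%:E.
Proof. by rewrite cluster_grad; exact: (Hhat_grad C D gamma sigma_gt0 cluster_X1). Qed.

Lemma cluster_Hhat_W_min w : (Hhat z.1 z.2 <= Hhat w z.2)%E.
Proof.
rewrite cluster_grad; apply: (Hhat_W_block_min sigma_gt0 gamma_gt0 w cluster_X1).
by rewrite -cluster_grad; exact: cluster_W_block_min.
Qed.

Lemma cluster_Hhat_y_min y : (Hhat z.1 z.2 <= Hhat z.1 y)%E.
Proof.
by rewrite cluster_Hhat; exact: (energy_le_Hhat C D sigma gamma_gt0 y cluster_X1).
Qed.

End scheme.

Section stationarity.
Variable R : realType.
Variables (n m M l q : nat).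
Variables (A : 'I_M -> 'M[R]_n) (B2 : 'I_M -> 'M[R]_(n, m)).
Variables (B1 : 'M[R]_(n, l)) (C : 'M[R]_(q, n)) (D : 'M[R]_(q, m)).
Variables (gamma sigma : R).
Local Notation p := (n + m)%N.
Local Notation Hhat := (Hhat A B2 B1 C D gamma sigma).
Local Notation dirder := (dirder A B2 B1 C D gamma sigma).
Implicit Types z d : 'cV[R]_(p * p) * 'cV[R]_(n * m).

Lemma dirder_ge0 z d v : Hhat z.1 z.2 = v%:E ->
  (forall t, 0 < t -> (Hhat z.1 z.2 <= Hhat (z.1 + t *: d.1) (z.2 + t *: d.2))%E) ->
  (0 <= dirder z d)%E.
Proof.
move=> zv zmin; rewrite /dirder /Hhat2 /= zv.
apply: le_trans (ereal_sup_ubound _); last by exists 1 => //=; exact: ltr01.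
apply: le_ereal_inf_tmp => _ [t /andP[t0 _] <-].
apply: mule_ge0; last by rewrite lee_fin invr_ge0 ltW.
move: (zmin t t0); rewrite zv; case: (Hhat _ _) => [r| |] //.
- by rewrite lee_fin -EFinB lee_fin subr_ge0.
- by move=> _; rewrite addye ?leey.
Qed.

Lemma stationary_of_block_min z v : Hhat z.1 z.2 = v%:E ->
  (forall w, (Hhat z.1 z.2 <= Hhat w z.2)%E) ->
  (forall y, (Hhat z.1 z.2 <= Hhat z.1 y)%E) ->
  regular A B2 B1 C D gamma sigma z -> stationary A B2 B1 C D gamma sigma z.
Proof.
move=> zv Wmin ymin zreg d _; apply: zreg.
- by apply: dirder_ge0 zv _ => t _ /=; rewrite scaler0 addr0.
- by apply: dirder_ge0 zv _ => t _ /=; rewrite scaler0 addr0.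
Qed.

End stationarity.

Theorem theorem28 (R : realType) (n m M l q : nat)
  (A : 'I_M -> 'M[R]_n) (B2 : 'I_M -> 'M[R]_(n, m))
  (B1 : 'M[R]_(n, l)) (C : 'M[R]_(q, n)) (D : 'M[R]_(q, m))
  (gamma sigma lambda : R)
  (X : nat -> 'cV[R]_((n + m) * (n + m)) * 'cV[R]_(n * m))
  (z : 'cV[R]_((n + m) * (n + m)) * 'cV[R]_(n * m)) :
  (0 < n)%N -> (0 < m)%N -> (0 < M)%N ->
  C^T *m D = 0 ->
  posdef (D^T *m D) -> posdef (B1 *m B1^T) -> posdef (C^T *m C) ->
  0 < gamma -> 0 < sigma -> 0 < lambda ->
  is_scheme A B2 B1 C D gamma sigma lambda X ->
  cluster (X @ \oo) z ->
  (forall d1, (Hhat A B2 B1 C D gamma sigma (z.1 + d1) z.2 < +oo)%E ->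
     (Hhat A B2 B1 C D gamma sigma z.1 z.2
      <= Hhat A B2 B1 C D gamma sigma (z.1 + d1) z.2)%E) /\
  (forall d2, (Hhat A B2 B1 C D gamma sigma z.1 (z.2 + d2) < +oo)%E ->
     (Hhat A B2 B1 C D gamma sigma z.1 z.2
      <= Hhat A B2 B1 C D gamma sigma z.1 (z.2 + d2))%E) /\
  (regular A B2 B1 C D gamma sigma z -> stationary A B2 B1 C D gamma sigma z).
Proof.
(* The dimension and definiteness assumptions only serve, in the paper, to
   produce cluster points; here a cluster point is given. *)
move=> _ _ _ _ _ _ _ gamma_gt0 sigma_gt0 lambda_gt0 X_scheme X_cluster.
have Wmin := cluster_Hhat_W_min gamma_gt0 sigma_gt0 lambda_gt0 X_scheme X_cluster.
have ymin := cluster_Hhat_y_min gamma_gt0 sigma_gt0 lambda_gt0 X_scheme X_cluster.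
have zfin := cluster_Hhat gamma_gt0 sigma_gt0 lambda_gt0 X_scheme X_cluster.
split; [by move=> d1 _; exact: Wmin | split; [by move=> d2 _; exact: ymin |]].
exact: stationary_of_block_min zfin Wmin ymin.
Qed.
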